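(* For rankings $\succ$, $R$ and $R'$ on a finite set $\mathcal{X}$, the following are equivalent: (1) $R$ is more aligned with $\succ$ than $R'$; (2) for every non-empty $X\subseteq\mathcal{X}$, the $R$-highest alternative in $X$ is identical to or $\succ$-better than the $R'$-highest alternative in $X$.
   Context: A ranking on $\mathcal{X}$ is an irreflexive, transitive and total binary relation. $R$ is more aligned with $\succ$ than $R'$ if for all $x,y\in\mathcal{X}$ with $x\succ y$, $xR'y$ implies $xRy$. The $R$-highest alternative in $X$ is the $x\in X$ with $xRy$ for all $y\in X\setminus\{x\}$. *)

From mathcomp Require Import all_boot.
Set Implicit Arguments. Unset Strict Implicit. Unset Printing Implicit Defensive.

Definition ranking (T : finType) (R : rel T) : Prop :=
  irreflexive R /\ transitive R /\ (forall x y : T, x != y -> R x y || R y x).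

Definition more_aligned (T : finType) (P R R' : rel T) : Prop :=
  forall x y : T, P x y -> R' x y -> R x y.

Definition highest (T : finType) (R : rel T) (X : {set T}) (x : T) : Prop :=
  x \in X /\ forall y : T, y \in X -> y != x -> R x y.

From mathcomp Require Import all_boot.

(* If R' puts x' above the R-highest x of X but x' is P-better than x, then
   x' R' x with x' P x forces x' R x by alignment, contradicting x R x'.
   Conversely, a violation x P y, x R' y, y R x of alignment is witnessed by
   the two-element menu [set x; y]. *)

Section Alignment.

Variable T : finType.

Lemma irr_trans_asym {R : rel T} {x y : T} :
  irreflexive R -> transitive R -> R x y -> ~~ R y x.
Proof. by move=> Rirr Rtr Rxy; apply/negP => /(Rtr _ _ _ Rxy); rewrite Rirr. Qed.

Lemma highest_set2 {R : rel T} {x y : T} : R x y -> highest R [set x; y] x.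
Proof.
move=> Rxy; split=> [|z]; first exact: set21.
by case/set2P=> ->; rewrite ?eqxx.
Qed.

Variables P R R' : rel T.

Lemma more_aligned_highest :
  irreflexive R -> transitive R -> (forall x y, x != y -> P x y || P y x) ->
  more_aligned P R R' ->
  forall (X : {set T}) (x x' : T),
    highest R X x -> highest R' X x' -> x = x' \/ P x x'.
Proof.
move=> Rirr Rtr Ptot aligned X x x' [xX Rx] [x'X R'x'].
have [->|neq_xx'] := eqVneq x x'; [by left | right].
case/orP: (Ptot _ _ neq_xx') => // Px'x.
have Rx'x := aligned _ _ Px'x (R'x' _ xX neq_xx').
have Rxx' : R x x' by apply: Rx; rewrite // eq_sym.
by have := irr_trans_asym Rirr Rtr Rxx'; rewrite Rx'x.
Qed.

Lemma highest_more_aligned :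
  irreflexive P -> transitive P -> (forall x y, x != y -> R x y || R y x) ->
  (forall (X : {set T}) (x x' : T), X != set0 ->
     highest R X x -> highest R' X x' -> x = x' \/ P x x') ->
  more_aligned P R R'.
Proof.
move=> Pirr Ptr Rtot agree x y Pxy R'xy.
have neq_xy : x != y by apply: contraTneq Pxy => ->; rewrite Pirr.
case/orP: (Rtot _ _ neq_xy) => // Ryx.
have nonempty : [set y; x] != set0 by apply/set0Pn; exists y; apply: set21.
have R'_highest : highest R' [set y; x] x by rewrite setUC; apply: highest_set2.
case: (agree _ _ _ nonempty (highest_set2 Ryx) R'_highest) => [eq_yx|Pyx].
- by rewrite eq_yx eqxx in neq_xy.
- by have := irr_trans_asym Pirr Ptr Pxy; rewrite Pyx.
Qed.

End Alignment.

Theorem mainTheorem13 (T : finType) (P R R' : rel T) :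
  ranking P -> ranking R -> ranking R' ->
  (more_aligned P R R' <->
   (forall (X : {set T}) (x x' : T), X != set0 ->
      highest R X x -> highest R' X x' -> x = x' \/ P x x')).
Proof.
move=> [Pirr [Ptr Ptot]] [Rirr [Rtr Rtot]] _; split.
- by move=> aligned X x x' _; apply: more_aligned_highest.
- exact: highest_more_aligned.
Qed.
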